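(* Let $G(\mathcal V,\mathcal E)$ be a finite simple directed graph and $f\ge 0$ an integer. Suppose that for every partition $A,B,F$ of $\mathcal V$ with $A,B$ non-empty and $|F|\le f$, either $A \Rightarrow_{\mathcal V - F} B$ or $B \Rightarrow_{\mathcal V - F} A$. Then for every partition $L,C,R,F$ of $\mathcal V$ (with $C$ or $F$ possibly empty) such that $L,R$ are non-empty and $|F|\le f$, either $L\cup C\rightarrow R$ or $R\cup C\rightarrow L$.
   Context: For disjoint sets $X,Y\subseteq\mathcal V$ with $Y$ non-empty, $X\rightarrow Y$ means that $X$ contains at least $f+1$ distinct nodes $i$ such that $(i,j)\in\mathcal E$ for some $j\in Y$. An $(X,y)$-path is a directed path from some node of $X$ to the node $y\notin X$; it excludes $F$ if it contains no node of $F$; $(X,y)$-paths are disjoint if they pairwise share only $y$. For pairwise disjoint $X,Y,F$ with $|F|\le f$, $X \Rightarrow_{\mathcal V - F} Y$ means: $Y=\emptyset$, or every $y\in Y$ has at least $f+1$ pairwise disjoint $(X,y)$-paths excluding $F$. *)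

(* Finite simple directed graph: vertex type T : finType,
   edge relation e : rel T (irreflexive: no self-loops; a relation has no
   multi-edges). *)
From mathcomp Require Import all_boot.
Set Implicit Arguments. Unset Strict Implicit. Unset Printing Implicit Defensive.

Section Defs.
Variables (T : finType) (e : rel T) (f : nat).

Definition arrow (X Y : {set T}) : bool :=
  f.+1 <= #|[set i in X | [exists j in Y, e i j]]|.

Definition XY_path (X : {set T}) (y : T) (p : seq T) : Prop :=
  [/\ y \notin X, uniq p & (exists x, exists q, p = x :: q /\ x \in X /\ path e x q /\ last x q = y)].

Definition excludes (F : {set T}) (p : seq T) : Prop :=
  forall v, v \in p -> v \notin F.

Definition reach (X Y F : {set T}) : Prop :=
  Y = set0 \/
  forall y, y \in Y ->
    exists P : 'I_f.+1 -> seq T,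
      (forall i, XY_path X y (P i) /\ excludes F (P i)) /\
      (forall i j, i != j -> forall v, v \in P i -> v \in P j -> v = y).

End Defs.

(* Say L ∪ C ⇒ R (the other case is symmetric, with a target node chosen in L).
   Fix y ∈ R and f+1 pairwise disjoint paths into y avoiding F. Each path starts
   outside R and ends in R, so the node just before its first entry into R has
   an edge into R and lies outside R ∪ F, i.e. in L ∪ C; disjointness of the
   paths away from y makes these f+1 nodes distinct. *)
From mathcomp Require Import all_boot.

Set Implicit Arguments.
Unset Strict Implicit.
Unset Printing Implicit Defensive.

Section EntryEdges.
Variables (T : finType) (e : rel T).

Lemma path_edge_into (S : {set T}) x q :
  x \notin S -> last x q \in S -> path e x q ->
  exists2 i, i \in x :: q & (i \notin S) && [exists j in S, e i j].
Proof.
elim: q x => [|y q IHq] x /= xS; first by rewrite (negbTE xS).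
move=> lastS /andP[exy pyq].
have [yS | yNS] := boolP (y \in S).
  by exists x; rewrite ?mem_head // xS; apply/existsP; exists y; rewrite yS.
by have [i iq iP] := IHq y yNS lastS pyq; exists i; rewrite // in_cons iq orbT.
Qed.

Lemma XY_path_edge_into (X S : {set T}) y p :
  XY_path e X y p -> [disjoint X & S] -> y \in S ->
  exists2 i, i \in p & (i \notin S) && [exists j in S, e i j].
Proof.
case=> _ _ [x [q [-> [xX [pxq <-]]]]] dXS lastS.
exact: path_edge_into (negbT (disjointFr dXS xX)) lastS pxq.
Qed.

Variable f : nat.

Lemma disjoint_paths_arrow (X S Z F : {set T}) y (P : 'I_f.+1 -> seq T) :
  y \in S -> [disjoint X & S] -> ~: (S :|: F) \subset Z ->
  (forall i, XY_path e X y (P i) /\ excludes F (P i)) ->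
  (forall i j, i != j -> forall v, v \in P i -> v \in P j -> v = y) ->
  arrow e f Z S.
Proof.
move=> yS dXS sZ HP Pdisj.
have /fin_all_exists[g gP] : forall a, exists i : T,
    i \in P a /\ (i \notin S) && [exists j in S, e i j].
  move=> a; have [i iPa iP] := XY_path_edge_into (HP a).1 dXS yS.
  by exists i.
have g_inj : injective g.
  move=> a b gab; apply/eqP/negPn/negP => neq_ab.
  have [gPa /andP[gNS _]] := gP a; have [gPb _] := gP b.
  move: gPb; rewrite -gab => /(Pdisj a b neq_ab _ gPa) gy.
  by rewrite gy yS in gNS.
rewrite /arrow -[X in X <= _](card_ord f.+1) -cardsT -(card_imset _ g_inj).
apply: subset_leq_card; apply/subsetP => _ /imsetP[a _ ->].
have [gPa /andP[gNS gE]] := gP a.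
rewrite inE gE andbT (subsetP sZ) // !inE negb_or gNS.
exact: (HP a).2.
Qed.

Lemma reach_arrow (X Y S Z F : {set T}) :
  reach e f X Y F -> S \subset Y -> S != set0 ->
  [disjoint X & S] -> ~: (S :|: F) \subset Z -> arrow e f Z S.
Proof.
move=> [Y0 | HY] sSY /set0Pn[y yS] dXS sZ.
  by move: (subsetP sSY y yS); rewrite Y0 inE.
have [P [HP Pdisj]] := HY y (subsetP sSY y yS).
exact: disjoint_paths_arrow yS dXS sZ HP Pdisj.
Qed.

End EntryEdges.

Theorem lemma7 (T : finType) (e : rel T) (f : nat) :
  irreflexive e ->
  (forall A B F : {set T},
      [disjoint A & B] -> [disjoint A & F] -> [disjoint B & F] ->
      A :|: B :|: F = [set: T] ->
      A != set0 -> B != set0 -> #|F| <= f ->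
      reach e f A B F \/ reach e f B A F) ->
  forall L C R F : {set T},
    [disjoint L & C] -> [disjoint L & R] -> [disjoint L & F] ->
    [disjoint C & R] -> [disjoint C & F] -> [disjoint R & F] ->
    L :|: C :|: R :|: F = [set: T] ->
    L != set0 -> R != set0 -> #|F| <= f ->
    arrow e f (L :|: C) R \/ arrow e f (R :|: C) L.
Proof.
move=> _ Hreach L C R F _ dLR dLF dCR dCF dRF cover L0 R0 Ff.
have inLCRF v : v \in L :|: C :|: R :|: F by rewrite cover inE.
have dLC_R : [disjoint L :|: C & R] by rewrite -setI_eq0 setIUl setU_eq0 !setI_eq0 dLR dCR.
have dLC_F : [disjoint L :|: C & F] by rewrite -setI_eq0 setIUl setU_eq0 !setI_eq0 dLF dCF.
have LC0 : L :|: C != set0 by rewrite setU_eq0 negb_and L0.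
have [HR | HL] := Hreach _ _ _ dLC_R dLC_F dRF cover LC0 R0 Ff.
- left; apply: reach_arrow HR (subxx R) R0 dLC_R _.
  apply/subsetP => v; move: (inLCRF v); rewrite !inE.
  by case: (v \in L); case: (v \in C); case: (v \in R); case: (v \in F).
- right; apply: reach_arrow HL (subsetUl L C) L0 _ _; first by rewrite disjoint_sym.
  apply/subsetP => v; move: (inLCRF v); rewrite !inE.
  by case: (v \in L); case: (v \in C); case: (v \in R); case: (v \in F).
Qed.
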